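(* For every formula $\phi$, if $\vdash_{\mathsf{BB'IW}}\phi$, then $\phi$ is $\Lambda_{\mathrm{NF}}$-inhabited.
   Context: Formulas are built from propositional atoms with $\to$. $\vdash_{\mathsf{BB'IW}}\phi$ means that there is a combinator, built by application from the constants ${\sf B},{\sf B'},{\sf I},{\sf W}$, of type $\phi$, where the constants receive as types all instances of, respectively, $(\chi\to\psi)\to((\phi\to\chi)\to(\phi\to\psi))$, $(\phi\to\chi)\to((\chi\to\psi)\to(\phi\to\psi))$, $\phi\to\phi$, $(\phi\to(\phi\to\chi))\to(\phi\to\chi)$, and an application $MN$ has type $\psi$ when $M$ has type $\chi\to\psi$ and $N$ type $\chi$ (equivalently, $\phi$ is derivable from these axiom schemes by modus ponens). Let $\mathcal X$ be a countably infinite set of variables with an injective map $\mathcal O:\mathcal X\to\mathbb N$; write $x<y$ iff $\mathcal O(x)<\mathcal O(y)$. Terms are terms of pure $\lambda$-calculus over $\mathcal X$, not identified up to $\alpha$-conversion; two distinct $\lambda$'s never bind the same variable and no variable is both free and bound in a term. HRM terms: every variable; $\lambda x.M$ if $M$ is HRM and $x$ is the greatest free variable of $M$; $(MN)$ if $M,N$ are HRM and for each free variable $x$ of $M$ there is a free variable $y$ of $N$ with $x\le y$. Fix $\Omega$ from variables to formulas with $\Omega^{-1}(\phi)$ infinite for all $\phi$. Typing: $x:\Omega(x)$; if $x:\chi$, $M:\psi$ and $\lambda x.M$ is HRM then $\lambda x.M:\chi\to\psi$; if $M:\chi\to\psi$, $N:\chi$, $(MN)$ HRM then $(MN):\psi$.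 $\Lambda_{\mathrm{NF}}$ is the set of typed terms in $\beta$-normal form; $\phi$ is $\Lambda_{\mathrm{NF}}$-inhabited if some closed term of $\Lambda_{\mathrm{NF}}$ has type $\phi$. *)

From Stdlib Require Import List.
Import ListNotations.
Set Implicit Arguments.

Inductive form : Type :=
| Atom : nat -> form
| Imp : form -> form -> form.

Inductive comb : Type :=
| CB | CB' | CI | CW
| CApp : comb -> comb -> comb.

Inductive ctype : comb -> form -> Prop :=
| ct_B : forall phi chi psi,
    ctype CB (Imp (Imp chi psi) (Imp (Imp phi chi) (Imp phi psi)))
| ct_B' : forall phi chi psi,
    ctype CB' (Imp (Imp phi chi) (Imp (Imp chi psi) (Imp phi psi)))
| ct_I : forall phi, ctype CI (Imp phi phi)
| ct_W : forall phi chi,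
    ctype CW (Imp (Imp phi (Imp phi chi)) (Imp phi chi))
| ct_App : forall M N chi psi,
    ctype M (Imp chi psi) -> ctype N chi -> ctype (CApp M N) psi.

Definition derivable_BBIW (phi : form) : Prop := exists c, ctype c phi.

Section Lambda.
Variable X : Type.
Variable O : X -> nat.      (* the injective map O; x < y iff O x < O y *)
Variable Omega : X -> form.

(** Pure lambda terms over X, not identified up to alpha-conversion. *)
Inductive term : Type :=
| Var : X -> term
| Lam : X -> term -> term
| App : term -> term -> term.

Fixpoint FV (M : term) (x : X) : Prop :=
  match M with
  | Var y => x = y
  | Lam y N => x <> y /\ FV N x
  | App N P => FV N x \/ FV P x
  end.

Fixpoint binders (M : term) : list X :=
  match M with
  | Var _ => []
  | Lam y N => y :: binders N
  | App N P => binders N ++ binders P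
  end.

Definition proper_term (M : term) : Prop :=
  NoDup (binders M) /\ (forall x, FV M x -> ~ In x (binders M)).

Definition closed (M : term) : Prop := forall x, ~ FV M x.

Inductive HRM : term -> Prop :=
| HRM_var : forall x, HRM (Var x)
| HRM_lam : forall x M, HRM M -> FV M x ->
    (forall y, FV M y -> O y <= O x) -> HRM (Lam x M)
| HRM_app : forall M N, HRM M -> HRM N ->
    (forall x, FV M x -> exists y, FV N y /\ O x <= O y) -> HRM (App M N).

Inductive has_type : term -> form -> Prop :=
| ty_var : forall x, has_type (Var x) (Omega x)
| ty_lam : forall x M psi, has_type M psi -> HRM (Lam x M) ->
    has_type (Lam x M) (Imp (Omega x) psi)
| ty_app : forall M N chi psi, has_type M (Imp chi psi) -> has_type N chi ->
    HRM (App M N) -> has_type (App M N) psi.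

Fixpoint beta_normal (M : term) : Prop :=
  match M with
  | Var _ => True
  | Lam _ N => beta_normal N
  | App N P =>
      match N with Lam _ _ => False | _ => True end
      /\ beta_normal N /\ beta_normal P
  end.

Definition NF_inhabited (phi : form) : Prop :=
  exists M, proper_term M /\ closed M /\ beta_normal M /\ has_type M phi.

End Lambda.

Definition infinite_set (X : Type) (P : X -> Prop) : Prop :=
  forall l : list X, exists x, P x /\ ~ In x l.

(* Each of B, B', I, W has an evident closed HRM normal inhabitant, so it is
   enough to show that such inhabitants are closed under modus ponens.  The
   normal form of an application of two normal HRM terms is computed by
   hereditary substitution, by induction on the size of the argument type: a
   new redex appears only when the substituted variable is in head position,
   and its type is then strictly smaller.  The HRM condition survives
   substitution because a variable dominated by the substituted one becomes
   dominated by a free variable of the substituted term, which the HRM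
   condition of the application supplies.  The calculus is developed with de
   Bruijn levels, whose order is the order of binders; finally levels are
   named by fresh variables of increasing O, which exist because every type
   has infinitely many variables. *)

From Stdlib Require Import List Arith Lia FinFun.
Import ListNotations.

(* Terms with de Bruijn levels: [tvar i] is the variable bound by the i-th
   enclosing binder counted from the outside, so in a context of length d a
   [tlam] binds level d, and levels are ordered like their binders. *)
Inductive tm : Type :=
| tvar (i : nat)
| tlam (t : tm)
| tapp (t u : tm).

Fixpoint occurs (t : tm) (i : nat) : Prop :=
  match t with
  | tvar j => i = j
  | tlam t => occurs t i
  | tapp t u => occurs t i \/ occurs u i
  end.

Definition fv (d : nat) (t : tm) (i : nat) : Prop := occurs t i /\ i < d.

(* The level bound by a [tlam] at depth d is d, which is automatically the
   greatest variable free in its body. *)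
Fixpoint hrm (d : nat) (t : tm) : Prop :=
  match t with
  | tvar _ => True
  | tlam t => hrm (S d) t /\ occurs t d
  | tapp t u =>
      hrm d t /\ hrm d u /\ (forall i, fv d t i -> exists j, fv d u j /\ i <= j)
  end.

Definition is_lam (t : tm) : Prop := match t with tlam _ => True | _ => False end.

Fixpoint normal (t : tm) : Prop :=
  match t with
  | tvar _ => True
  | tlam t => normal t
  | tapp t u => ~ is_lam t /\ normal t /\ normal u
  end.

Inductive lty : list form -> tm -> form -> Prop :=
| lty_var : forall G i A, nth_error G i = Some A -> lty G (tvar i) A
| lty_lam : forall G t A B, lty (G ++ [A]) t B -> lty G (tlam t) (Imp A B)
| lty_app : forall G t u A B,
    lty G t (Imp A B) -> lty G u A -> lty G (tapp t u) B.

Fixpoint head (t : tm) : option nat :=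
  match t with
  | tvar i => Some i
  | tlam _ => None
  | tapp t _ => head t
  end.

Fixpoint fsize (A : form) : nat :=
  match A with
  | Atom _ => 1
  | Imp A B => S (fsize A + fsize B)
  end.

Lemma fv_app d t u i : fv d (tapp t u) i <-> fv d t i \/ fv d u i.
Proof. unfold fv; simpl; tauto. Qed.

Lemma lty_var_inv G i A : lty G (tvar i) A -> i < length G /\ nth_error G i = Some A.
Proof.
  intros H; inversion H; subst.
  split; auto. apply nth_error_Some; congruence.
Qed.

Lemma lty_head_fsize G t A : lty G t A ->
  forall i B, head t = Some i -> nth_error G i = Some B -> fsize A <= fsize B.
Proof.
  induction 1 as [G j A Hj| |G t u A B Ht IHt _ _]; simpl; intros i C Hh HC;
    try discriminate.
  - injection Hh as <-. rewrite Hj in HC. injection HC as <-. lia.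
  - specialize (IHt i C Hh HC). simpl in IHt. lia.
Qed.

Fixpoint ren (r : nat -> nat) (t : tm) : tm :=
  match t with
  | tvar i => tvar (r i)
  | tlam t => tlam (ren r t)
  | tapp t u => tapp (ren r t) (ren r u)
  end.

(* Renames the free levels of a term at depth n into depth n'; the levels
   from n on belong to binders inside the term and are translated. *)
Definition mono_ren (r : nat -> nat) (n n' : nat) : Prop :=
  (forall i, i < n -> r i < n') /\ (forall k, r (n + k) = n' + k) /\
  (forall i j, i < j -> r i < r j).

Definition shift (m d i : nat) : nat := if i <? m then i else i + d.

Lemma mono_ren_shift m d : mono_ren (shift m d) m (m + d).
Proof.
  unfold shift; repeat split; intros.
  - destruct (Nat.ltb_spec i m); lia.
  - destruct (Nat.ltb_spec (m + k) m); lia.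
  - destruct (Nat.ltb_spec i m), (Nat.ltb_spec j m); lia.
Qed.

Lemma mono_ren_S r n n' : mono_ren r n n' -> mono_ren r (S n) (S n').
Proof.
  intros [Hlt [Hbound Hmono]]; repeat split; auto.
  - intros i Hi. destruct (Nat.eq_dec i n) as [->|Hne].
    + specialize (Hbound 0). rewrite !Nat.add_0_r in Hbound. lia.
    + specialize (Hlt i). lia.
  - intros k. specialize (Hbound (S k)). rewrite <- !plus_n_Sm in Hbound. auto.
Qed.

Lemma mono_ren_top r n n' : mono_ren r n n' -> r n = n'.
Proof. intros [_ [Hbound _]]. specialize (Hbound 0). rewrite !Nat.add_0_r in Hbound. auto. Qed.

Lemma mono_ren_le r n n' i j : mono_ren r n n' -> i <= j -> r i <= r j.
Proof.
  intros [_ [_ Hmono]] Hij.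
  destruct (Nat.eq_dec i j) as [->|Hne]; [lia|]. specialize (Hmono i j). lia.
Qed.

Lemma occurs_ren r t j : occurs (ren r t) j <-> exists i, occurs t i /\ r i = j.
Proof.
  induction t; simpl.
  - split; [intros ->; eauto | intros [k [-> <-]]; auto].
  - auto.
  - rewrite IHt1, IHt2. firstorder.
Qed.

Lemma fv_ren r n n' t j :
  mono_ren r n n' -> (fv n' (ren r t) j <-> exists i, fv n t i /\ r i = j).
Proof.
  intros [Hlt [Hbound Hmono]]. unfold fv. rewrite occurs_ren. split.
  - intros [[i [Hi <-]] Hl]. exists i. repeat split; auto.
    destruct (Nat.lt_ge_cases i n); auto. specialize (Hbound (i - n)).
    replace (n + (i - n)) with i in Hbound by lia. lia.
  - intros [i [[Hi Hl] <-]]. split; eauto.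
Qed.

Lemma hrm_ren r t : forall n n', hrm n t -> mono_ren r n n' -> hrm n' (ren r t).
Proof.
  induction t as [i|t IHt|t IHt u IHu]; simpl; intros n n' Hh Hr; auto.
  - destruct Hh as [Hh Ho]. split.
    + apply (IHt (S n)); auto using mono_ren_S.
    + apply occurs_ren. exists n. split; auto using mono_ren_top.
  - destruct Hh as [Ht [Hu Hdom]]. split; [eauto|split; [eauto|]].
    intros i Hi. apply (fv_ren r n n' t i Hr) in Hi. destruct Hi as [k [Hk <-]].
    destruct (Hdom k Hk) as [j [Hj Hkj]]. exists (r j). split.
    + apply (fv_ren r n n' u (r j) Hr). eauto.
    + eapply mono_ren_le; eauto.
Qed.

Lemma normal_ren r t : normal t -> normal (ren r t).
Proof.
  induction t as [|t IHt|t IHt u IHu]; simpl; auto.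
  intros [Hl [Ht Hu]]. split; auto. destruct t; simpl in *; auto.
Qed.

Lemma lty_ren r G t A : lty G t A ->
  forall G', mono_ren r (length G) (length G') ->
  (forall i, i < length G -> nth_error G' (r i) = nth_error G i) ->
  lty G' (ren r t) A.
Proof.
  induction 1 as [G i A Hi|G t A B _ IHt|G t u A B _ IHt _ IHu];
    intros G' Hr Hnth; simpl.
  - constructor. rewrite Hnth; auto. apply nth_error_Some. congruence.
  - constructor. apply IHt; rewrite !length_app, !Nat.add_1_r.
    + apply mono_ren_S; auto.
    + intros i Hi. destruct (Nat.lt_ge_cases i (length G)).
      * pose proof (proj1 Hr i) as Hri. rewrite !nth_error_app1; auto.
      * replace i with (length G) by lia. rewrite (mono_ren_top _ _ _ Hr).
        rewrite !nth_error_app2, !Nat.sub_diag by lia. auto.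
  - econstructor; eauto.
Qed.

(* The free variables left after substituting, for the level m of a term with
   free variables p, a term with free variables s (all below m): the levels
   above m move down by one. *)
Definition subst_fv (m : nat) (p s : nat -> Prop) (i : nat) : Prop :=
  (p i /\ i < m) \/ (p (S i) /\ m <= i) \/ (p m /\ s i).

Lemma subst_fv_ext m p p' s i :
  (forall k, p k <-> p' k) -> (subst_fv m p s i <-> subst_fv m p' s i).
Proof. intros H. unfold subst_fv. rewrite !H. tauto. Qed.

Lemma subst_fv_or m p q s i :
  subst_fv m (fun k => p k \/ q k) s i <-> subst_fv m p s i \/ subst_fv m q s i.
Proof. unfold subst_fv. tauto. Qed.

Lemma subst_fv_lam m n t s i : m <= n -> (forall j, s j -> j < m) ->
  subst_fv m (fv (S n) (tlam t)) s i <-> subst_fv m (fv (S (S n)) t) s i /\ i < n.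
Proof.
  intros Hmn Hs. unfold subst_fv, fv; simpl. specialize (Hs i).
  split; [intros [[[? ?] ?]|[[[? ?] ?]|[[? ?] ?]]]
         |intros [[[[? ?] ?]|[[[? ?] ?]|[[? ?] ?]]] ?]]; intuition lia.
Qed.

(* Substitution preserves the domination condition of [hrm]: a free variable
   dominated by the substituted level m is dominated by a variable of s. *)
Lemma subst_fv_dominated (p q s : nat -> Prop) m :
  (forall j, s j -> j < m) ->
  (forall i, p i -> i < m -> exists j, s j /\ i <= j) ->
  (forall i, p i -> exists j, q j /\ i <= j) ->
  forall i, subst_fv m p s i -> exists j, subst_fv m q s j /\ i <= j.
Proof.
  unfold subst_fv.
  intros Hs Hps Hpq i [[Hp Hl]|[[Hp Hl]|[Hp Hsi]]].
  - destruct (Hpq i Hp) as [j [Hq Hij]].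
    destruct (lt_eq_lt_dec j m) as [[Hjm|<-]|Hjm].
    + exists j. auto.
    + destruct (Hps i Hp Hl) as [k [Hk Hik]]. exists k. auto.
    + exists (j - 1). split; [|lia]. right; left.
      replace (S (j - 1)) with j by lia. split; auto; lia.
  - destruct (Hpq (S i) Hp) as [j [Hq Hij]]. exists (j - 1). split; [|lia].
    right; left. replace (S (j - 1)) with j by lia. split; auto; lia.
  - destruct (Hpq m Hp) as [j [Hq Hij]]. destruct (Nat.eq_dec j m) as [->|Hne].
    + exists i. auto.
    + exists (j - 1). specialize (Hs i Hsi). split; [|lia]. right; left.
      replace (S (j - 1)) with j by lia. split; auto; lia.
Qed.

(* Hereditary substitution of N for the level |G| of M.  The last clause says
   that a head lambda can only be created by replacing the head variable,
   whose type then contains that of the lambda. *)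
Definition hsubst_spec (A : form) (M : tm) : Prop :=
  forall G D B N,
  lty (G ++ A :: D) M B -> normal M -> hrm (length G + S (length D)) M ->
  lty G N A -> normal N -> hrm (length G) N ->
  (forall i, fv (length G + S (length D)) M i -> i < length G ->
     exists j, fv (length G) N j /\ i <= j) ->
  exists R, lty (G ++ D) R B /\ normal R /\ hrm (length G + length D) R /\
    (forall i, fv (length G + length D) R i <->
       subst_fv (length G) (fv (length G + S (length D)) M) (fv (length G) N) i) /\
    (is_lam R -> is_lam M \/ head M = Some (length G)).

Definition happ_spec (A : form) : Prop :=
  forall G R Q B,
  lty G R (Imp A B) -> lty G Q A -> normal R -> normal Q ->
  hrm (length G) R -> hrm (length G) Q ->
  (forall i, fv (length G) R i -> exists j, fv (length G) Q j /\ i <= j) ->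
  exists M, lty G M B /\ normal M /\ hrm (length G) M /\
    (forall i, fv (length G) M i <-> fv (length G) R i \/ fv (length G) Q i).

Lemma hsubst_spec_var A j : hsubst_spec A (tvar j).
Proof.
  intros G D B N HM _ _ HN HnN HhN _.
  apply lty_var_inv in HM. destruct HM as [Hj Hnth].
  rewrite length_app in Hj; simpl in Hj.
  destruct (lt_eq_lt_dec j (length G)) as [[Hjm| ->]|Hjm].
  - exists (tvar j). rewrite nth_error_app1 in Hnth by auto.
    split; [constructor; rewrite nth_error_app1; auto|].
    do 2 (split; [exact I|]). split; [|simpl; tauto].
    intros i. unfold subst_fv, fv; simpl. split.
    + intros [-> ?]. left; lia.
    + intros [[[? ?] ?]|[[[? ?] ?]|[[? ?] ?]]]; lia.
  - rewrite nth_error_app2, Nat.sub_diag in Hnth by lia.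
    injection Hnth as ->.
    pose proof (mono_ren_shift (length G) (length D)) as Hsh.
    exists (ren (shift (length G) (length D)) N).
    split; [|split; [|split; [|split]]].
    + apply (lty_ren _ _ _ _ HN); [rewrite length_app; auto|].
      intros i Hi. unfold shift. destruct (Nat.ltb_spec i (length G)); try lia.
      apply nth_error_app1; auto.
    + apply normal_ren; auto.
    + eapply hrm_ren; eauto.
    + intros i. rewrite (fv_ren _ _ _ _ _ Hsh). unfold subst_fv, fv; simpl. split.
      * intros [k [Hk <-]]. assert (k < length G) by (destruct Hk; lia).
        unfold shift. destruct (Nat.ltb_spec k (length G)); try lia. auto.
      * intros [[? ?]|[[? ?]|[_ Hi]]]; try lia.
        exists i. split; auto.
        unfold shift. destruct (Nat.ltb_spec i (length G)); destruct Hi; lia.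
    + right; reflexivity.
  - exists (tvar (j - 1)).
    rewrite nth_error_app2 in Hnth by lia.
    replace (j - length G) with (S (j - 1 - length G)) in Hnth by lia.
    split; [constructor; rewrite nth_error_app2 by lia; auto|].
    do 2 (split; [exact I|]). split; [|simpl; tauto].
    intros i. unfold subst_fv, fv; simpl. split.
    + intros [-> ?]. right; left. lia.
    + intros [[[? ?] ?]|[[[? ?] ?]|[[? ?] ?]]]; lia.
Qed.

Lemma is_lam_dec t : is_lam t \/ ~ is_lam t.
Proof. destruct t; simpl; tauto. Qed.

Lemma hsubst_spec_lam A t : hsubst_spec A t -> hsubst_spec A (tlam t).
Proof.
  intros IHt G D B N HM Hn Hh HN HnN HhN Hdom.
  inversion HM as [|? ? T B' Ht|]; subst.
  simpl in Hn, Hh. destruct Hh as [Hh Ho].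
  rewrite <- app_assoc in Ht. simpl in Ht.
  destruct (IHt G (D ++ [T]) B' N Ht Hn) as [R [HR1 [HR2 [HR3 [HR4 _]]]]];
    rewrite ?length_app, ?Nat.add_1_r, ?Nat.add_succ_r in *; auto.
  { intros i Hi Hl. apply Hdom; auto. destruct Hi; split; auto; lia. }
  exists (tlam R). split; [|split; [|split; [|split]]].
  - constructor. rewrite <- app_assoc. auto.
  - auto.
  - split; auto. apply HR4. right; left. split; [split|]; auto; lia.
  - intros i. rewrite subst_fv_lam, <- HR4 by (lia || (intros j []; auto)).
    unfold fv; simpl. intuition lia.
  - left; exact I.
Qed.

Lemma hsubst_spec_app A P Q :
  (forall T, fsize T < fsize A -> happ_spec T) ->
  hsubst_spec A P -> hsubst_spec A Q -> hsubst_spec A (tapp P Q).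
Proof.
  intros Happ IHP IHQ G D B N HM Hn Hh HN HnN HhN Hdom.
  inversion HM as [| |? ? ? T ? HP HQ]; subst.
  simpl in Hn, Hh. destruct Hn as [HlP [HnP HnQ]]. destruct Hh as [HhP [HhQ HPQ]].
  destruct (IHP G D (Imp T B) N HP HnP HhP HN HnN HhN) as [P' [HP1 [HP2 [HP3 [HP4 HP5]]]]].
  { intros i Hi. apply Hdom, fv_app. auto. }
  destruct (IHQ G D T N HQ HnQ HhQ HN HnN HhN) as [Q' [HQ1 [HQ2 [HQ3 [HQ4 _]]]]].
  { intros i Hi. apply Hdom, fv_app. auto. }
  assert (Hdom' : forall i, fv (length G + length D) P' i ->
                   exists j, fv (length G + length D) Q' j /\ i <= j).
  { intros i Hi. apply HP4 in Hi.
    destruct (subst_fv_dominated _ _ _ _ (fun k Hk => proj2 Hk)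
                (fun k Hk => Hdom k (proj2 (fv_app _ _ _ k) (or_introl Hk))) HPQ i Hi)
      as [j [Hj Hij]].
    exists j. rewrite HQ4. auto. }
  assert (Hfv : forall i, fv (length G + length D) P' i \/ fv (length G + length D) Q' i <->
      subst_fv (length G) (fv (length G + S (length D)) (tapp P Q)) (fv (length G) N) i).
  { intros i. rewrite HP4, HQ4, (subst_fv_ext _ _ _ _ _ (fv_app _ P Q)).
    symmetry. apply subst_fv_or. }
  destruct (is_lam_dec P') as [HL|HL].
  - destruct (HP5 HL) as [HLP|Hhead]; [contradiction|].
    assert (Hsize : fsize (Imp T B) <= fsize A).
    { apply (lty_head_fsize _ _ _ HP _ A Hhead).
      rewrite nth_error_app2, Nat.sub_diag by lia. reflexivity. }
    simpl in Hsize.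
    destruct (Happ T ltac:(lia) (G ++ D) P' Q' B) as [R [HR1 [HR2 [HR3 HR4]]]];
      rewrite ?length_app; auto.
    rewrite length_app in HR3, HR4.
    exists R. split; [auto|split; [auto|split; [auto|split]]].
    + intros i. rewrite HR4. apply Hfv.
    + intros _. right. exact Hhead.
  - exists (tapp P' Q'). split; [|split; [|split; [|split]]].
    + econstructor; eauto.
    + simpl; auto.
    + simpl; auto.
    + intros i. rewrite fv_app. apply Hfv.
    + simpl; tauto.
Qed.

Lemma happ_of_hsubst A : (forall M, hsubst_spec A M) -> happ_spec A.
Proof.
  intros HS G R Q B HR HQ HnR HnQ HhR HhQ Hdom.
  destruct (is_lam_dec R) as [HL|HL].
  - destruct R as [|P|]; try contradiction.
    inversion HR as [|? ? ? ? HP|]; subst. simpl in HnR, HhR. destruct HhR as [HhP Ho].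
    destruct (HS P G [] B Q HP HnR) as [M [HM1 [HM2 [HM3 [HM4 _]]]]];
      simpl; rewrite ?Nat.add_1_r, ?app_nil_r, ?Nat.add_0_r in *; auto.
    { intros i [Hi _] Hl. apply Hdom. split; auto. }
    exists M. split; [|split; [|split]]; auto.
    intros i. rewrite HM4. unfold subst_fv, fv; simpl. split.
    + intros [[[? ?] ?]|[[[? ?] ?]|[[? ?] ?]]]; auto; lia.
    + intros [[? ?]|?]; [left|right; right]; auto.
  - exists (tapp R Q). split; [|split; [|split]].
    + econstructor; eauto.
    + simpl; auto.
    + simpl; auto.
    + apply fv_app.
Qed.

Lemma happ_all A : happ_spec A.
Proof.
  induction A as [A IH] using (induction_ltof1 _ fsize).
  apply happ_of_hsubst. intros M.
  induction M; auto using hsubst_spec_var, hsubst_spec_lam.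
  apply hsubst_spec_app; auto.
Qed.

Definition nf_inhabited (A : form) : Prop :=
  exists t, lty [] t A /\ normal t /\ hrm 0 t.

Lemma nf_inhabited_mp A B : nf_inhabited (Imp A B) -> nf_inhabited A -> nf_inhabited B.
Proof.
  intros [t [Ht [Hnt Hht]]] [u [Hu [Hnu Hhu]]].
  destruct (happ_all A [] t u B Ht Hu Hnt Hnu Hht Hhu) as [M [HM1 [HM2 [HM3 _]]]].
  - intros i [_ Hi]. simpl in Hi. lia.
  - exists M. auto.
Qed.

Lemma nf_inhabited_ctype c A : ctype c A -> nf_inhabited A.
Proof.
  induction 1.
  - exists (tlam (tlam (tlam (tapp (tvar 0) (tapp (tvar 1) (tvar 2)))))).
    split; [repeat econstructor|]. simpl. repeat split; auto.
    all: intros i Hi; exists 2; unfold fv in *; simpl in *; lia.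
  - exists (tlam (tlam (tlam (tapp (tvar 1) (tapp (tvar 0) (tvar 2)))))).
    split; [repeat econstructor|]. simpl. repeat split; auto.
    all: intros i Hi; exists 2; unfold fv in *; simpl in *; lia.
  - exists (tlam (tvar 0)). split; [repeat econstructor|]. simpl. auto.
  - exists (tlam (tlam (tapp (tapp (tvar 0) (tvar 1)) (tvar 1)))).
    split; [repeat econstructor|]. simpl. repeat split; auto.
    all: intros i Hi; exists 1; unfold fv in *; simpl in *; lia.
  - eapply nf_inhabited_mp; eauto.
Qed.

Lemma nth_error_snoc_inv {T : Type} (l : list T) x i y :
  nth_error (l ++ [x]) i = Some y ->
  (i < length l /\ nth_error l i = Some y) \/ (i = length l /\ y = x).
Proof.
  intros H. destruct (Nat.lt_ge_cases i (length l)).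
  - left. rewrite nth_error_app1 in H; auto.
  - right. rewrite nth_error_app2 in H by auto.
    destruct (i - length l) as [|k] eqn:E.
    + injection H as <-. split; auto; lia.
    + destruct k; discriminate.
Qed.

Section Realization.

Variables (X : Type) (O : X -> nat) (Omega : X -> form).
Hypothesis O_inj : forall x y : X, O x = O y -> x = y.
Hypothesis Omega_inf : forall phi : form, infinite_set (fun x => Omega x = phi).

Lemma distinct_vars_of_type phi n :
  exists l : list X, NoDup l /\ length l = n /\ Forall (fun x => Omega x = phi) l.
Proof.
  induction n as [|n [l [Hnd [Hlen Hl]]]].
  - exists []. auto using NoDup_nil.
  - destruct (Omega_inf phi l) as [x [Hx Hnx]].
    exists (x :: l). split; [constructor; auto|]. simpl. auto.
Qed.

(* Pigeonhole: b + 1 distinct variables of type phi cannot all have O below b. *)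
Lemma fresh_var phi b : exists x, Omega x = phi /\ b <= O x.
Proof.
  destruct (distinct_vars_of_type phi (S b)) as [l [Hnd [Hlen Hl]]].
  destruct (Exists_dec (fun x => b <= O x) l (fun x => le_dec b (O x))) as [Hex|Hnex].
  - apply Exists_exists in Hex. destruct Hex as [x [Hin Hb]].
    exists x. rewrite Forall_forall in Hl. auto.
  - exfalso.
    assert (Hincl : incl (map O l) (seq 0 b)).
    { intros k Hk. apply in_map_iff in Hk. destruct Hk as [x [<- Hx]].
      apply in_seq. split; [lia|]. simpl.
      destruct (le_lt_dec b (O x)); auto.
      exfalso. apply Hnex, Exists_exists. eauto. }
    apply NoDup_incl_length in Hincl.
    + rewrite length_map, length_seq in Hincl. lia.
    + apply Injective_map_NoDup; [exact O_inj|auto].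
Qed.

Definition env_ok (G : list form) (e : list X) (b : nat) : Prop :=
  map Omega e = G /\
  (forall i j x y, nth_error e i = Some x -> nth_error e j = Some y -> i < j -> O x < O y) /\
  (forall x, In x e -> O x < b).

Lemma env_ok_nil : env_ok [] [] 0.
Proof.
  split; [reflexivity|split].
  - intros i j x y Hx. destruct i; discriminate.
  - intros x [].
Qed.

Lemma env_ok_length {G e b} : env_ok G e b -> length e = length G.
Proof. intros [<- _]. symmetry. apply length_map. Qed.

Lemma env_ok_bound {G e b i x} : env_ok G e b -> nth_error e i = Some x -> O x < b.
Proof. intros [_ [_ Hb]] Hx. apply Hb. eapply nth_error_In; eauto. Qed.

Lemma env_ok_mono {G e b} b' : env_ok G e b -> b <= b' -> env_ok G e b'.
Proof. intros [Hmap [Hinc Hb]] Hbb'. repeat split; auto. intros x Hx. specialize (Hb x Hx). lia. Qed.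

Lemma env_ok_snoc {G e b x A} : env_ok G e b -> Omega x = A -> b <= O x ->
  env_ok (G ++ [A]) (e ++ [x]) (S (O x)).
Proof.
  intros He Hx Hbx. destruct He as [Hmap [Hinc Hb]]. repeat split.
  - rewrite map_app, Hmap, <- Hx. reflexivity.
  - intros i j y z Hy Hz Hij.
    apply nth_error_snoc_inv in Hy, Hz.
    destruct Hy as [[Hi Hy]|[Hi ->]], Hz as [[Hj Hz]|[Hj ->]]; try lia; eauto.
    apply nth_error_In in Hy. specialize (Hb y Hy). lia.
  - intros y Hy. apply in_app_or in Hy.
    destruct Hy as [Hy|[<-|[]]]; [specialize (Hb y Hy)|]; lia.
Qed.

Definition is_Lam (M : term X) : Prop := match M with Lam _ _ => True | _ => False end.

(* M is t with its free levels named by e and its binders named by fresh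
   variables with O in [b, b'). *)
Definition realizes (t : tm) (A : form) (e : list X) (b : nat) (M : term X) (b' : nat) : Prop :=
  has_type O Omega M A /\ HRM O M /\ beta_normal M /\ NoDup (binders M) /\
  (forall x, In x (binders M) -> b <= O x < b') /\ b <= b' /\
  (forall x, FV M x <-> exists i, fv (length e) t i /\ nth_error e i = Some x) /\
  (is_Lam M -> is_lam t).

Lemma realize_var G i A e b : env_ok G e b -> nth_error G i = Some A ->
  exists M b', realizes (tvar i) A e b M b'.
Proof.
  intros He Hi. pose proof He as [Hmap _].
  rewrite <- Hmap, nth_error_map in Hi.
  destruct (nth_error e i) as [x|] eqn:Hx; simpl in Hi; [|discriminate].
  injection Hi as <-.
  exists (Var x), b. split; [|split; [|split; [|split; [|split; [|split; [|split]]]]]].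
  - apply ty_var.
  - apply HRM_var.
  - exact I.
  - apply NoDup_nil.
  - intros y [].
  - auto.
  - intros y. unfold fv; simpl. split.
    + intros ->. exists i. repeat split; auto. apply nth_error_Some. congruence.
    + intros [k [[-> _] Hk]]. congruence.
  - intros [].
Qed.

Lemma realize_lam G t A B e b :
  occurs t (length G) -> env_ok G e b ->
  (forall e' b', env_ok (G ++ [A]) e' b' -> exists M b'', realizes t B e' b' M b'') ->
  exists M b', realizes (tlam t) (Imp A B) e b M b'.
Proof.
  intros Ho He IH.
  destruct (fresh_var A b) as [x [Hx Hbx]].
  destruct (IH _ _ (env_ok_snoc He Hx Hbx))
    as [M [b' [HM1 [HM2 [HM3 [HM4 [HM5 [HM6 [HM7 _]]]]]]]]].
  pose proof (env_ok_length He) as Hlen.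
  rewrite length_app, Nat.add_1_r in HM7. simpl in HM7.
  assert (HFVx : FV M x).
  { apply HM7. exists (length e). rewrite nth_error_app2, Nat.sub_diag by lia.
    unfold fv. rewrite Hlen. auto. }
  assert (HFVM : forall y, FV M y -> y = x \/ O y < b).
  { intros y Hy. apply HM7 in Hy. destruct Hy as [i [_ Hi]].
    apply nth_error_snoc_inv in Hi. destruct Hi as [[_ Hi]|[_ ->]]; eauto using env_ok_bound. }
  assert (HRl : HRM O (Lam x M)).
  { apply HRM_lam; auto. intros y Hy. destruct (HFVM y Hy) as [->|]; lia. }
  exists (Lam x M), b'. split; [|split; [|split; [|split; [|split; [|split; [|split]]]]]].
  - rewrite <- Hx. apply ty_lam; auto.
  - auto.
  - exact HM3.
  - constructor; auto. intros Hin. specialize (HM5 x Hin). lia.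
  - intros y [<-|Hy]; [|specialize (HM5 y Hy)]; lia.
  - lia.
  - intros y. simpl. unfold fv. split.
    + intros [Hne Hy]. apply HM7 in Hy. destruct Hy as [i [[Hoc Hi] Hiy]].
      apply nth_error_snoc_inv in Hiy. destruct Hiy as [[Hi' Hiy]|[_ ->]]; [|congruence].
      exists i. auto.
    + intros [i [[Hoc Hi] Hiy]]. split.
      * intros ->. pose proof (env_ok_bound He Hiy). lia.
      * apply HM7. exists i. rewrite nth_error_app1 by lia. unfold fv. auto.
  - intros _. exact I.
Qed.

Lemma realize_app G t u A B e b :
  ~ is_lam t -> (forall i, fv (length G) t i -> exists j, fv (length G) u j /\ i <= j) ->
  env_ok G e b ->
  (forall b', env_ok G e b' -> exists M b'', realizes t (Imp A B) e b' M b'') ->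
  (forall b', env_ok G e b' -> exists M b'', realizes u A e b' M b'') ->
  exists M b', realizes (tapp t u) B e b M b'.
Proof.
  intros Hl Hdom He IHt IHu.
  rewrite <- (env_ok_length He) in Hdom.
  destruct (IHt b He) as [M1 [b1 [HM11 [HM12 [HM13 [HM14 [HM15 [HM16 [HM17 HM18]]]]]]]]].
  destruct (IHu b1 (env_ok_mono _ He HM16))
    as [M2 [b2 [HM21 [HM22 [HM23 [HM24 [HM25 [HM26 [HM27 _]]]]]]]]].
  assert (HRa : HRM O (App M1 M2)).
  { apply HRM_app; auto. intros x Hx. apply HM17 in Hx. destruct Hx as [i [Hi Hix]].
    destruct (Hdom i Hi) as [j [Hj Hij]].
    destruct (nth_error e j) as [y|] eqn:Hy;
      [|apply nth_error_None in Hy; destruct Hj; lia].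
    exists y. split; [apply HM27; eauto|].
    destruct (Nat.eq_dec i j) as [<-|Hne]; [rewrite Hix in Hy; injection Hy as ->; lia|].
    destruct He as [_ [Hinc _]]. specialize (Hinc i j x y Hix Hy). lia. }
  exists (App M1 M2), b2. split; [|split; [|split; [|split; [|split; [|split; [|split]]]]]].
  - eapply ty_app; eauto.
  - auto.
  - simpl. split; auto. destruct M1; simpl in HM18 |- *; auto.
  - apply NoDup_app; auto. intros y Hy1 Hy2.
    specialize (HM15 y Hy1). specialize (HM25 y Hy2). lia.
  - intros y Hy. apply in_app_or in Hy.
    destruct Hy as [Hy|Hy]; [specialize (HM15 y Hy)|specialize (HM25 y Hy)]; lia.
  - lia.
  - intros y. simpl. rewrite HM17, HM27. setoid_rewrite fv_app. firstorder.
  - intros [].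
Qed.

Lemma realize G t A : lty G t A -> normal t -> hrm (length G) t ->
  forall e b, env_ok G e b -> exists M b', realizes t A e b M b'.
Proof.
  induction 1 as [G i A Hi|G t A B _ IHt|G t u A B _ IHt _ IHu]; simpl;
    intros Hn Hh e b He.
  - eapply realize_var; eauto.
  - destruct Hh as [Hh Ho]. apply (realize_lam G t A B e b Ho He).
    intros e' b' He'. apply IHt; auto. rewrite length_app, Nat.add_1_r. auto.
  - destruct Hn as [Hl [Hnt Hnu]]. destruct Hh as [Hht [Hhu Hdom]].
    apply (realize_app G t u A B e b Hl Hdom He); intros b' He'; auto.
Qed.

Lemma NF_inhabited_of_nf_inhabited A : nf_inhabited A -> NF_inhabited O Omega A.
Proof.
  intros [t [Ht [Hn Hh]]].
  destruct (realize [] t A Ht Hn Hh [] 0 env_ok_nil)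
    as [M [b' [HM1 [_ [HM3 [HM4 [_ [_ [HM7 _]]]]]]]]].
  assert (Hcl : closed M).
  { intros x Hx. apply HM7 in Hx. destruct Hx as [i [[_ Hi] _]]. simpl in Hi. lia. }
  exists M. split; [split; auto|auto]. intros x Hx. contradiction (Hcl x Hx).
Qed.

End Realization.

Theorem lemma1p7 (X : Type) (O : X -> nat)
  (O_inj : forall x y : X, O x = O y -> x = y)
  (Omega : X -> form)
  (Omega_inf : forall phi : form, infinite_set (fun x => Omega x = phi))
  (phi : form) :
  derivable_BBIW phi -> NF_inhabited O Omega phi.
Proof.
  intros [c Hc].
  apply NF_inhabited_of_nf_inhabited; auto.
  exact (nf_inhabited_ctype c phi Hc).
Qed.
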